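(* For a finite list $L=[l_1,l_2,\dots,l_n]$ of nonnegative integers, let $A(L)$ denote the number of words that contain exactly $l_j$ copies of the letter $j$ for each $1\le j\le n$ (and no other letters) and avoid the pattern $123$; the empty word is counted, so $A(L)=1$ if all $l_j=0$. If $l_1+\dots+l_n\ge 1$, then $$A(L)=\sum_{\substack{1\le i\le n\\ l_i\ge 1}} A\big([\,l_1,l_2,\dots,l_{i-1},\ l_i-1,\ l_{i+1}+l_{i+2}+\dots+l_n\,]\big),$$ where for $i=n$ the last entry $l_{i+1}+\dots+l_n$ is the empty sum $0$.
   Context: A word $w_1\cdots w_m$ over the positive integers contains a pattern $p_1\cdots p_k$ if there are indices $i_1<\dots<i_k$ such that for all $r,s$: $w_{i_r}<w_{i_s}\iff p_r<p_s$ and $w_{i_r}>w_{i_s}\iff p_r>p_s$; otherwise it avoids it. In particular, containing $123$ means having three positions $i_1<i_2<i_3$ with $w_{i_1}<w_{i_2}<w_{i_3}$. *)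

From mathcomp Require Import all_boot.
Set Implicit Arguments. Unset Strict Implicit. Unset Printing Implicit Defensive.

(* A word w (a seq nat of positive integers) contains the pattern p if there are
   positions i_1 < ... < i_k (selected by a mask) such that for all r, s:
   w_{i_r} < w_{i_s} <-> p_r < p_s  (quantifying over all ordered pairs also
   gives the ">" condition). *)
Definition contains_pattern (p w : seq nat) : bool :=
  [exists m : (size w).-tuple bool,
    let s := mask m w in
    (size s == size p) &&
    [forall r : 'I_(size p), forall t : 'I_(size p),
       (nth 0 s r < nth 0 s t) == (nth 0 p r < nth 0 p t)]].

Definition avoids_pattern (p w : seq nat) : bool := ~~ contains_pattern p w.

(* The multiset of letters given by L = [l_1; ...; l_n]: l_j copies of letter j. *)
Definition letters (L : seq nat) : seq nat :=
  flatten [seq nseq (nth 0 L j) j.+1 | j <- iota 0 (size L)].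

(* Words with exactly l_j copies of j (and no other letters) are exactly the
   distinct rearrangements of [letters L]; [permutations] lists them without
   duplicates. A(L) counts those avoiding 123. *)
Definition A (L : seq nat) : nat :=
  count (avoids_pattern [:: 1; 2; 3]) (permutations (letters L)).

From mathcomp Require Import all_boot zify.
Set Implicit Arguments. Unset Strict Implicit. Unset Printing Implicit Defensive.

(* Split the nonempty words by their first letter x = i+1 (l_i > 0). A word
   x :: w avoids 123 iff w avoids 123 and the letters of w above x occur in
   weakly decreasing order. "Capping" every letter above x down to x+1
   ([cap x]) is then a bijection from these tails w onto the 123-avoiding
   rearrangements of the capped multiset: the inverse ([uncap]) refills the
   x+1 slots with the letters above x in decreasing order. Finally, capping
   the multiset of L with one copy of i+1 removed gives exactly the multiset
   of [l_1, ..., l_i - 1, l_(i+1) + ... + l_n]. *)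

Local Notation avoids123 := (avoids_pattern [:: 1; 2; 3]).

Definition incr3 (w : seq nat) : Prop :=
  exists a b c, [/\ a < b, b < c & subseq [:: a; b; c] w].

Definition rise_above (x : nat) (w : seq nat) : Prop :=
  exists b c, [/\ x < b, b < c & subseq [:: b; c] w].

Lemma contains123P w : contains_pattern [:: 1; 2; 3] w <-> incr3 w.
Proof.
split.
- case/existsP=> m /andP []; set s := mask m w => size_s /forallP order_s.
  have : subseq s w by exact: mask_subseq.
  move: size_s order_s; case: s => [|a [|b [|c [|d s]]]] //= _ order_s sub_w.
  have /eqP lt_ab := forallP (order_s (@Ordinal 3 0 isT)) (@Ordinal 3 1 isT).
  have /eqP lt_bc := forallP (order_s (@Ordinal 3 1 isT)) (@Ordinal 3 2 isT).
  by exists a, b, c; rewrite lt_ab lt_bc.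
- case=> a [b [c [lt_ab lt_bc /subseqP [m size_m def_abc]]]].
  apply/existsP; exists (Tuple (introT eqP size_m)).
  rewrite /= -def_abc /=; apply/forallP => r; apply/forallP => t.
  case: r => [[|[|[|r]]] Hr] //; case: t => [[|[|[|t]]] Ht] //=;
  rewrite ?ltnn //; apply/eqP; lia.
Qed.

Lemma geq_trans : transitive geq.
Proof. by move=> a b c /= le_ab le_ca; apply: leq_trans le_ca le_ab. Qed.

Lemma geq_anti : antisymmetric geq.
Proof. by move=> a b; rewrite andbC => /anti_leq. Qed.

Lemma geq_total : total geq.
Proof. by move=> a b; rewrite /= orbC leq_total. Qed.

Lemma sorted_geqP s : sorted geq s <-> forall b c, subseq [:: b; c] s -> c <= b.
Proof.
split=> [sorted_s b c /(subseq_sorted geq_trans) /(_ sorted_s) /= /andP [] //|].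
elim: s => // b s IH pairs_s; case: s IH pairs_s => // c s IH pairs_s /=.
apply/andP; split.
- by apply: pairs_s; rewrite /= !eqxx sub0seq.
- apply: IH => b' c' sub_s; apply: pairs_s.
  exact: subseq_trans sub_s (subseq_cons _ _).
Qed.

Lemma sorted_aboveP x w :
  sorted geq [seq c <- w | x < c] <-> ~ rise_above x w.
Proof.
rewrite sorted_geqP; split.
- move=> pairs_w [b [c [lt_xb lt_bc sub_w]]].
  have : subseq [:: b; c] [seq c <- w | x < c].
    by rewrite subseq_filter /= lt_xb sub_w (ltn_trans lt_xb lt_bc).
  by move/pairs_w; rewrite leqNgt lt_bc.
- move=> no_rise b c; rewrite subseq_filter /= andbT.
  case/andP=> /andP [lt_xb lt_xc] sub_w.
  by rewrite leqNgt; apply/negP => lt_bc; apply: no_rise; exists b, c.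
Qed.

Lemma incr3_cons x w : incr3 (x :: w) <-> incr3 w \/ rise_above x w.
Proof.
split.
- case=> a [b [c [lt_ab lt_bc]]] /=; case: eqP => [<- sub_w|_ sub_w].
  + by right; exists b, c.
  + by left; exists a, b, c.
- case=> [[a [b [c [lt_ab lt_bc sub_w]]]]|[b [c [lt_xb lt_bc sub_w]]]].
  + by exists a, b, c; split => //; apply: subseq_trans sub_w (subseq_cons _ _).
  + by exists x, b, c; rewrite /= eqxx.
Qed.

Lemma avoids_consP x w :
  avoids123 (x :: w) <-> ~ incr3 w /\ sorted geq [seq c <- w | x < c].
Proof.
rewrite sorted_aboveP /avoids_pattern; split.
- move/negP; rewrite contains123P incr3_cons => no_incr.
  by split=> [incr_w | rise_w]; apply: no_incr; [left | right].
- by case=> no_incr no_rise; apply/negP; rewrite contains123P incr3_cons; case.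
Qed.

Definition cap (x c : nat) : nat := minn c x.+1.

(* [uncap x D u] replaces the successive occurrences of [x.+1] in [u] by the
   successive letters of [D]; it inverts [cap x] when [D] lists the letters
   above [x] of the original word in order. *)
Fixpoint uncap (x : nat) (D u : seq nat) : seq nat :=
  if u is c :: u' then
    if c == x.+1 then head x.+1 D :: uncap x (behead D) u' else c :: uncap x D u'
  else [::].

Section Cap.
Variable x : nat.

Lemma cap_id c : c <= x.+1 -> cap x c = c.
Proof. by rewrite /cap; lia. Qed.

Lemma cap_above c : x < c -> cap x c = x.+1.
Proof. by rewrite /cap; lia. Qed.

Lemma cap_le c : cap x c <= x.+1.
Proof. exact: geq_minr. Qed.

Lemma uncap_cap w : uncap x [seq c <- w | x < c] (map (cap x) w) = w.
Proof.
elim: w => //= c w IH; case: (leqP c x) => le_cx /=.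
- by rewrite cap_id ?ifN ?IH //; lia.
- by rewrite cap_above // eqxx IH.
Qed.

Lemma cap_uncap D u :
  all (fun d => x < d) D -> all (fun c => c <= x.+1) u ->
  map (cap x) (uncap x D u) = u.
Proof.
elim: u D => //= c u IH D D_above /andP [le_c u_capped].
case: (eqVneq c x.+1) => [-> | ne_c] /=.
- case: D D_above => [|d D] /= => [_ | /andP [lt_xd D_above]].
  + by rewrite cap_id // IH.
  + by rewrite cap_above // IH.
- by rewrite cap_id // IH.
Qed.

Lemma filter_uncap D u :
  all (fun d => x < d) D -> all (fun c => c <= x.+1) u ->
  count_mem x.+1 u = size D -> [seq c <- uncap x D u | x < c] = D.
Proof.
elim: u D => [|c u IH] D /=; first by case: D.
move=> D_above /andP [le_c u_capped]; case: (eqVneq c x.+1) => [_ | ne_c] /=.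
- by case: D D_above => //= d D /andP [-> D_above] [/IH ->].
- by rewrite ifN => [/IH ->|]; last lia.
Qed.

Lemma perm_uncap D u :
  all (fun d => x < d) D -> all (fun c => c <= x.+1) u ->
  count_mem x.+1 u = size D -> perm_eq (uncap x D u) ([seq c <- u | c <= x] ++ D).
Proof.
elim: u D => [|c u IH] D /=; first by case: D.
move=> D_above /andP [le_c u_capped]; case: (eqVneq c x.+1) => [-> | ne_c] /=.
- case: D D_above => //= d D /andP [_ D_above] [size_D].
  by rewrite ltnn perm_sym -cat1s perm_catCA perm_cons perm_sym IH.
- by rewrite add0n => size_D; rewrite ifT ?perm_cons ?IH //; lia.
Qed.

End Cap.

Section CapBijection.
Variable x : nat.

Lemma cap_inj w1 w2 : perm_eq w1 w2 ->
  sorted geq [seq c <- w1 | x < c] -> sorted geq [seq c <- w2 | x < c] ->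
  map (cap x) w1 = map (cap x) w2 -> w1 = w2.
Proof.
move=> perm_w12 sorted_w1 sorted_w2 cap_w12.
rewrite -(uncap_cap x w1) -(uncap_cap x w2) cap_w12; congr uncap.
by apply: (sorted_eq geq_trans geq_anti) => //; apply: perm_filter.
Qed.

Lemma avoids_cap w : avoids123 (x :: w) -> avoids123 (map (cap x) w).
Proof.
case/avoids_consP => no_incr _.
apply/negP => /contains123P [a [b [c [lt_ab lt_bc]]]].
case/subseqP => m size_m; rewrite -map_mask.
have : subseq (mask m w) w by exact: mask_subseq.
case: (mask m w) => [|a' [|b' [|c' [|d' s]]]] //= sub_w [def_a def_b def_c].
apply: no_incr; exists a', b', c'; split => //.
- by move: lt_ab; rewrite def_a def_b /cap; lia.
- by move: lt_bc; rewrite def_b def_c /cap; lia.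
Qed.

(* Conversely, a 123 in [w] without rise above [x] survives capping, since
   only its last letter can lie above [x]. *)
Lemma avoids_uncap w : sorted geq [seq c <- w | x < c] ->
  avoids123 (map (cap x) w) -> avoids123 (x :: w).
Proof.
move=> sorted_w /negP no_incr_cap; apply/avoids_consP; split => //.
move/sorted_aboveP: sorted_w => no_rise [a [b [c [lt_ab lt_bc sub_w]]]].
case: (ltnP x b) => [lt_xb | le_bx].
- apply: no_rise; exists b, c; split => //.
  exact: subseq_trans (subseq_cons _ a) sub_w.
- apply: no_incr_cap; apply/contains123P; exists (cap x a), (cap x b), (cap x c).
  by split; [rewrite /cap; lia | rewrite /cap; lia | exact: (map_subseq _ sub_w)].
Qed.

Lemma filter_le_cap M : [seq c <- map (cap x) M | c <= x] = [seq c <- M | c <= x].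
Proof.
elim: M => //= c M IH; case: (leqP c x) => [le_cx | lt_xc].
- by rewrite cap_id ?le_cx ?IH //; lia.
- by rewrite cap_above // ltnn IH.
Qed.

(* Every 123-avoiding rearrangement of the capped multiset comes from a tail:
   refill its [x.+1] slots with the letters above [x] in decreasing order. *)
Lemma cap_onto M u : perm_eq u (map (cap x) M) -> avoids123 u ->
  exists2 w, avoids123 (x :: w) && perm_eq w M & u = map (cap x) w.
Proof.
move=> perm_u avoid_u; set D := sort geq [seq c <- M | x < c].
have D_above : all (fun d => x < d) D by rewrite all_sort filter_all.
have u_capped : all (fun c => c <= x.+1) u.
  by rewrite (perm_all _ perm_u) all_map; apply/allP => c _; apply: cap_le.
have size_D : count_mem x.+1 u = size D.
  rewrite (permP perm_u) count_map size_sort size_filter.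
  by apply: eq_count => c /=; rewrite /cap; lia.
exists (uncap x D u); last by rewrite cap_uncap.
apply/andP; split.
- apply: avoids_uncap; last by rewrite cap_uncap.
  by rewrite filter_uncap //; apply: (sort_sorted geq_total).
- apply: perm_trans (perm_uncap D_above u_capped size_D) _.
  apply: perm_trans (permEl (perm_filterC (fun c => c <= x) M)); apply: perm_cat.
  + by rewrite -(filter_le_cap M) perm_filter.
  + by rewrite /D perm_sort (eq_filter (fun c => ltnNge x c)).
Qed.

Lemma count_avoids_cons M :
  count (fun w => avoids123 (x :: w)) (permutations M)
  = count avoids123 (permutations (map (cap x) M)).
Proof.
rewrite -!size_filter.
set F := [seq w <- permutations M | avoids123 (x :: w)].
have memF w : w \in F -> avoids123 (x :: w) /\ perm_eq w M.
  by rewrite mem_filter mem_permutations => /andP.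
have cap_injF : {in F &, injective (map (cap x))}.
  move=> w1 w2 /memF [/avoids_consP [_ sorted_w1] perm_w1].
  move=> /memF [/avoids_consP [_ sorted_w2] perm_w2].
  by apply: cap_inj sorted_w1 sorted_w2; rewrite (permPl perm_w1) perm_sym.
rewrite -(size_map (map (cap x)) F); apply/perm_size/uniq_perm.
- by rewrite (map_inj_in_uniq cap_injF) filter_uniq ?permutations_uniq.
- by rewrite filter_uniq ?permutations_uniq.
- move=> u; rewrite mem_filter mem_permutations; apply/mapP/andP.
  + case=> w /memF [avoid_w perm_w] ->.
    by split; [exact: avoids_cap | exact: perm_map].
  + case=> avoid_u perm_u; case: (cap_onto perm_u avoid_u) => w F_w ->.
    by exists w; rewrite // mem_filter mem_permutations.
Qed.

End CapBijection.

Lemma letters_cons a L : letters (a :: L) = nseq a 1 ++ map succn (letters L).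
Proof.
have iota1 n : iota 1 n = map succn (iota 0 n) by rewrite -(iotaDl 1).
rewrite /letters /= iota1 map_flatten -!map_comp.
by congr (_ ++ flatten _); apply: eq_map => j /=; rewrite map_nseq.
Qed.

Lemma letters_cat s t :
  letters (s ++ t) = letters s ++ map (addn (size s)) (letters t).
Proof.
elim: s => [|a s IH] /=; first by rewrite map_id_in // => c; rewrite add0n.
rewrite !letters_cons IH map_cat -catA -!map_comp; congr (_ ++ _).
Qed.

Lemma mem_letters y L :
  (y \in letters L)
  = has (fun j => (0 < nth 0 L j) && (y == j.+1)) (iota 0 (size L)).
Proof.
rewrite /letters; apply/flattenP/hasP.
- by case=> s /mapP [j j_in ->]; rewrite mem_nseq => y_j; exists j.
- case=> j j_in y_j; exists (nseq (nth 0 L j) j.+1); first exact: map_f.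
  by rewrite mem_nseq.
Qed.

Lemma letters_bounds L c : c \in letters L -> 0 < c <= size L.
Proof.
by rewrite mem_letters => /hasP [j]; rewrite mem_iota => j_in /andP [_ /eqP ->].
Qed.

Lemma size_letters L : size (letters L) = sumn L.
Proof.
elim: L => //= a L IH.
by rewrite letters_cons size_cat size_nseq size_map IH.
Qed.

Lemma rem_cat_notin (x : nat) s t : x \notin s -> rem x (s ++ t) = s ++ rem x t.
Proof.
elim: s => //= y s IH; rewrite inE negb_or => /andP [ne_xy /IH ->].
by rewrite eq_sym (negbTE ne_xy).
Qed.

Lemma cap_rem_letters L i : i < size L -> 0 < nth 0 L i ->
  map (cap i.+1) (rem i.+1 (letters L))
  = letters (take i L ++ [:: (nth 0 L i).-1; sumn (drop i.+1 L)]).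
Proof.
move=> lt_i_L pos_l; set s := take i L; set t := drop i.+1 L.
have size_s : size s = i by rewrite size_take lt_i_L.
have -> : letters L = letters (s ++ nth 0 L i :: t).
  by rewrite -drop_nth // cat_take_drop.
case: (nth 0 L i) pos_l => // l _.
rewrite !letters_cat !letters_cons size_s /= cats0 !map_cat.
rewrite rem_cat_notin /= ?eqxx ?map_cat ?map_nseq; last first.
  by apply/negP => /letters_bounds; rewrite size_s ltnn andbF.
have cap_s : map (cap i.+1) (letters s) = letters s.
  apply: map_id_in => c /letters_bounds; rewrite size_s => bounds_c.
  by rewrite cap_id //; lia.
have cap_t : map (cap i.+1) (map (addn i) (map succn (letters t)))
             = nseq (sumn t) (i + 2).
  rewrite -size_letters -(size_map succn) -(size_map (addn i)).
  rewrite -(size_map (cap i.+1)).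
  apply/all_pred1P; rewrite !all_map; apply/allP => c /letters_bounds /=.
  by move=> bounds_c; rewrite cap_above ?addn2 //; lia.
by rewrite addn1 eqxx map_cat map_nseq cap_s cap_t cap_id.
Qed.

Lemma count_allpairs_cons T (P : pred (seq T)) (s : seq T)
    (t : T -> seq (seq T)) :
  count P [seq x :: y | x <- s, y <- t x]
  = \sum_(x <- s) count (fun y => P (x :: y)) (t x).
Proof.
elim: s => [|x s IH] /=; first by rewrite big_nil.
by rewrite count_cat count_map IH big_cons.
Qed.

Lemma big_undup_letters L (F : nat -> nat) :
  \sum_(x <- undup (letters L)) F x = \sum_(i < size L | 0 < nth 0 L i) F i.+1.
Proof.
have perm_L : perm_eq (undup (letters L))
                      [seq j.+1 | j <- iota 0 (size L) & 0 < nth 0 L j].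
  apply: uniq_perm;
    rewrite ?undup_uniq ?(map_inj_uniq succn_inj) ?filter_uniq ?iota_uniq //.
  move=> y; rewrite mem_undup mem_letters; apply/hasP/mapP.
  - by case=> j j_in /andP [pos_j /eqP ->]; exists j; rewrite // mem_filter pos_j.
  - case=> j; rewrite mem_filter => /andP [pos_j j_in] ->.
    by exists j; rewrite // pos_j eqxx.
rewrite (perm_big _ perm_L) big_map big_filter.
rewrite -(big_mkord (fun i => 0 < nth 0 L i) (fun i => F i.+1)).
by rewrite /index_iota subn0.
Qed.

Theorem theorem1 (L : seq nat) (hL : 1 <= sumn L) :
  A L = \sum_(i < size L | 0 < nth 0 L i)
          A (take i L ++ [:: (nth 0 L i).-1; sumn (drop i.+1 L)]).
Proof.
have nonempty : 0 < size (letters L) by rewrite size_letters.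
rewrite {1}/A (permP (permutationsE nonempty)) count_allpairs_cons.
rewrite big_undup_letters; apply: eq_bigr => i pos_i.
by rewrite count_avoids_cons cap_rem_letters.
Qed.
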